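(* Consider the algorithm described below (Algorithm A) for a real Hilbert space $H$, a nonempty closed convex set $C\subseteq H$ and a mapping $F\colon H\to H$ that is monotone and Lipschitz continuous with constant $L>0$, where the variational inequality ''find $x^*\in C$ with $\langle F(x^* ),x-x^*\rangle\ge0$ for all $x\in C$'' has nonempty solution set $S$. Suppose that at some iteration $n\ge1$ the algorithm reaches Step 4(i), i.e. $t_n>0$ and $\lambda_n\ge\lambda_{n-1}$. Then there exists $\lambda_n'\in[\lambda_{n-1},\lambda_n]$ with $\|\lambda_n'F(y_n)-\lambda_{n-1}F(y_{n-1})\|\le\alpha\|y_n-y_{n-1}\|$ (so Step 4(i) is well-defined).
   Context: Convention: $0/0=+\infty$ and $1/0=+\infty$. $P_C$ is the metric projection onto $C$. Algorithm A: Step 1. Choose $x_0\in C$, $\lambda_{-1}>0$, $\theta_0=1$, $\alpha\in(0,\sqrt2-1)$ and $\bar\lambda>0$. Compute $y_0=P_C(x_0-\lambda_{-1}F(x_0))$, $\lambda_0=\min\{\alpha\|x_0-y_0\|/\|F(x_0)-F(y_0)\|,\bar\lambda\}$, $x_1=P_C(x_0-\lambda_0F(y_0))$. Step 2 (for $n\ge1$). Set $\theta_n=1$ and define, for $y\in H$, $\theta>0$, $\lambda(y,\theta)=\min\{\alpha\|y-y_{n-1}\|/\|F(y)-F(y_{n-1})\|,\ \frac{1+\theta_{n-1}}{\theta}\lambda_{n-1},\ \bar\lambda\}$. Compute $y_n=2x_n-x_{n-1}$, $\lambda_n=\lambda(y_n,\theta_n)$, $x_{n+1}=P_C(x_n-\lambda_nF(y_n))$.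 Step 3. If $\|y_n-P_C(x_n-\lambda_nF(y_n))\|+\|x_n-y_n\|=0$, stop ($x_n$ is a solution). Otherwise compute $t_n=-\|x_{n+1}-x_n\|^2+2\lambda_n\langle F(y_n),y_n-x_{n+1}\rangle+(1-\alpha(1+\sqrt2))\|x_n-y_n\|^2-\alpha\|x_n-y_{n-1}\|^2+(1-\sqrt2\alpha)\|x_{n+1}-y_n\|^2$. Step 4. If $t_n\le0$, go to Step 2 with $n:=n+1$. Otherwise: (i) if $\lambda_n\ge\lambda_{n-1}$, choose $\lambda_n'\in[\lambda_{n-1},\lambda_n]$ with $\|\lambda_n'F(y_n)-\lambda_{n-1}F(y_{n-1})\|\le\alpha\|y_n-y_{n-1}\|$, recompute $x_{n+1}=P_C(x_n-\lambda_n'F(y_n))$, set $\lambda_n:=\lambda_n'$, $n:=n+1$, go to Step 2; (ii) if $\lambda_n<\lambda_{n-1}$, find $\theta_n'\in(0,1]$ such that, with $y_n'=x_n+\theta_n'(x_n-x_{n-1})$, one has $\lambda(y_n',\theta_n')\ge\theta_n'\lambda_{n-1}$; then choose $\lambda_n'\in[\theta_n'\lambda_{n-1},\lambda(y_n',\theta_n')]$ with $\|\lambda_n'F(y_n')-\theta_n'\lambda_{n-1}F(y_{n-1})\|\le\alpha\|y_n'-y_{n-1}\|$, recompute $x_{n+1}=P_C(x_n-\lambda_n'F(y_n'))$, set $\lambda_n:=\lambda_n'$, $\theta_n:=\theta_n'$, $y_n:=y_n'$, $n:=n+1$, go to Step 2. *)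

From HB Require Import structures.
From mathcomp Require Import all_boot all_order all_algebra.
From mathcomp Require Import all_classical all_reals all_analysis.
Set Implicit Arguments. Unset Strict Implicit. Unset Printing Implicit Defensive.
Import Order.TTheory GRing.Theory Num.Theory.
Import numFieldNormedType.Exports.
Local Open Scope classical_set_scope.
Local Open Scope ring_scope.

Definition is_inner_product (R : realType) (H : completeNormedModType R)
  (ip : H -> H -> R) : Prop :=
  [/\ (forall x y, ip x y = ip y x),
      (forall a x y z, ip (a *: x + y) z = a * ip x z + ip y z) &
      (forall x, `|x| ^+ 2 = ip x x)].

Definition is_proj (R : realType) (H : completeNormedModType R)
  (C : set H) (z p : H) : Prop :=
  C p /\ forall c, C c -> `|z - p| <= `|z - c|.

Definition monotone_op (R : realType) (H : completeNormedModType R)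
  (ip : H -> H -> R) (F : H -> H) : Prop :=
  forall x y, 0 <= ip (F x - F y) (x - y).

Definition lipschitz_op (R : realType) (H : completeNormedModType R)
  (F : H -> H) (L : R) : Prop :=
  forall x y, `|F x - F y| <= L * `|x - y|.

Definition VI_solvable (R : realType) (H : completeNormedModType R)
  (ip : H -> H -> R) (C : set H) (F : H -> H) : Prop :=
  exists xs, C xs /\ forall x, C x -> 0 <= ip (F xs) (x - xs).

(* The quotient alpha*|y-yp| / |F y - F yp| with the convention
   a/0 = +oo (encoded as None). *)
Definition ratio (R : realType) (H : completeNormedModType R)
  (F : H -> H) (alpha : R) (y yp : H) : option R :=
  if `|F y - F yp| == 0 then None
  else Some (alpha * `|y - yp| / `|F y - F yp|).

Definition minq (R : realType) (q : option R) (b : R) : R :=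
  match q with Some a => Num.min a b | None => b end.

(* lambda(y, theta) of Step 2, where yp = y_{n-1}, lp = lambda_{n-1},
   thp = theta_{n-1}. *)
Definition lam_fn (R : realType) (H : completeNormedModType R)
  (F : H -> H) (alpha lambar : R) (yp : H) (lp thp : R) (y : H) (th : R) : R :=
  minq (ratio F alpha y yp) (Num.min ((1 + thp) / th * lp) lambar).

(* t_n of Step 3, with xn = x_n, yn = y_n, yp = y_{n-1}, ln = lambda_n,
   xn1 = x_{n+1}. *)
Definition t_val (R : realType) (H : completeNormedModType R)
  (ip : H -> H -> R) (F : H -> H) (alpha : R) (xn yn yp : H) (ln : R)
  (xn1 : H) : R :=
  - `|xn1 - xn| ^+ 2 + 2 * ln * ip (F yn) (yn - xn1)
  + (1 - alpha * (1 + Num.sqrt 2)) * `|xn - yn| ^+ 2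
  - alpha * `|xn - yp| ^+ 2
  + (1 - Num.sqrt 2 * alpha) * `|xn1 - yn| ^+ 2.

Definition not_stopped (R : realType) (H : completeNormedModType R)
  (xn yn xn1 : H) : Prop :=
  `|yn - xn1| + `|xn - yn| != 0.

(* Step 1 of Algorithm A (x, y, lam, th indexed from 0; lam_m1 = lambda_{-1}). *)
Definition algA_init (R : realType) (H : completeNormedModType R)
  (C : set H) (F : H -> H) (alpha lambar lam_m1 : R)
  (x y : nat -> H) (lam th : nat -> R) : Prop :=
  C (x 0%N) /\ 0 < lam_m1 /\ 0 < alpha < Num.sqrt 2 - 1 /\ 0 < lambar /\
  th 0%N = 1 /\
  is_proj C (x 0%N - lam_m1 *: F (x 0%N)) (y 0%N) /\
  lam 0%N = minq (ratio F alpha (x 0%N) (y 0%N)) lambar /\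
  is_proj C (x 0%N - lam 0%N *: F (y 0%N)) (x 1%N).

(* Iteration k >= 1 of Algorithm A (Steps 2-4) was executed, producing
   the final values y k, lam k, th k and x (k+1), starting from the previous
   values x (k-1), x k, y (k-1), lam (k-1), th (k-1). *)
Definition algA_step (R : realType) (H : completeNormedModType R)
  (ip : H -> H -> R) (C : set H) (F : H -> H) (alpha lambar : R)
  (x y : nat -> H) (lam th : nat -> R) (k : nat) : Prop :=
  let lf := lam_fn F alpha lambar (y k.-1) (lam k.-1) (th k.-1) in
  let y0 := 2 *: x k - x k.-1 in
  let l0 := lf y0 1 in
  exists x0 : H,
    is_proj C (x k - l0 *: F y0) x0 /\
    not_stopped (x k) y0 x0 /\
    let t := t_val ip F alpha (x k) y0 (y k.-1) l0 x0 in
    [\/ (t <= 0 /\ [/\ y k = y0, lam k = l0, th k = 1 & x k.+1 = x0]),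
        (0 < t /\ lam k.-1 <= l0 /\
          [/\ lam k.-1 <= lam k <= l0,
              `|lam k *: F y0 - lam k.-1 *: F (y k.-1)|
                <= alpha * `|y0 - y k.-1|,
              y k = y0, th k = 1 &
              is_proj C (x k - lam k *: F y0) (x k.+1)])
      | (0 < t /\ l0 < lam k.-1 /\
          let th' := th k in
          let y' := x k + th' *: (x k - x k.-1) in
          (0 < th' <= 1 /\ th' * lam k.-1 <= lf y' th' /\
           th' * lam k.-1 <= lam k <= lf y' th' /\
           `|lam k *: F y' - (th' * lam k.-1) *: F (y k.-1)|
                <= alpha * `|y' - y k.-1| /\
           y k = y' /\
           is_proj C (x k - lam k *: F y') (x k.+1)))].

From Pilot Require Import Defs.
From HB Require Import structures.
From mathcomp Require Import all_boot all_order all_algebra.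
From mathcomp Require Import all_classical all_reals all_analysis.
Import Order.TTheory GRing.Theory Num.Theory.
Import numFieldNormedType.Exports.
Local Open Scope classical_set_scope.
Local Open Scope ring_scope.
Set Implicit Arguments. Unset Strict Implicit.

(* Step sizes and relaxation parameters stay nonnegative along the run, so in
   Step 4(i) the old step size lambda_{n-1} is itself an admissible choice:
   lambda_{n-1} <= lambda_n <= alpha |y_n - y_{n-1}| / |F y_n - F y_{n-1}|
   gives the required Lipschitz-type bound at once. *)

Section StepSize.

Variables (R : realType) (H : completeNormedModType R) (F : H -> H).
Variables (alpha lambar : R).
Hypotheses (alpha_ge0 : 0 <= alpha) (lambar_ge0 : 0 <= lambar).

Lemma ratio_ge0 y yp a : Defs.ratio F alpha y yp = Some a -> 0 <= a.
Proof.
by rewrite /Defs.ratio; case: ifP => // _ [<-]; rewrite divr_ge0 // mulr_ge0.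
Qed.

Lemma minq_ratio_ge0 y yp b : 0 <= b -> 0 <= minq (Defs.ratio F alpha y yp) b.
Proof.
case E: (Defs.ratio F alpha y yp) => [a|] //= b_ge0.
by rewrite le_min b_ge0 andbT (ratio_ge0 E).
Qed.

Lemma lam_fn_ge0 yp lp thp y th :
  0 <= lp -> 0 <= thp -> 0 <= th -> 0 <= lam_fn F alpha lambar yp lp thp y th.
Proof.
move=> lp_ge0 thp_ge0 th_ge0; apply: minq_ratio_ge0.
by rewrite le_min lambar_ge0 andbT !mulr_ge0 ?invr_ge0 ?addr_ge0.
Qed.

Lemma le_lam_fn_normB yp lp thp y th l :
  l <= lam_fn F alpha lambar yp lp thp y th ->
  l * `|F y - F yp| <= alpha * `|y - yp|.
Proof.
rewrite /lam_fn /Defs.ratio; case: ifP => [/eqP -> _ | /negbT nz_dF /= l_le].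
  by rewrite mulr0 mulr_ge0.
have dF_gt0 : 0 < `|F y - F yp| by rewrite lt_def nz_dF normr_ge0.
rewrite -ler_pdivlMr //; apply: le_trans l_le _; by rewrite ge_min lexx.
Qed.

Lemma le_lam_fn_normBZ yp lp thp y th l :
  0 <= l -> l <= lam_fn F alpha lambar yp lp thp y th ->
  `|l *: F y - l *: F yp| <= alpha * `|y - yp|.
Proof.
move=> l_ge0 /le_lam_fn_normB.
by rewrite -scalerBr normrZ ger0_norm.
Qed.

End StepSize.

Section Invariant.

Variables (R : realType) (H : completeNormedModType R) (ip : H -> H -> R).
Variables (C : set H) (F : H -> H) (alpha lambar lam_m1 : R).
Variables (x y : nat -> H) (lam th : nat -> R).

Lemma algA_init_ge0 :
  algA_init C F alpha lambar lam_m1 x y lam th ->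
  0 <= lam 0%N /\ 0 <= th 0%N.
Proof.
move=> [_ [_ [/andP[/ltW alpha_ge0 _] [/ltW lambar_ge0 [-> [_ [-> _]]]]]]].
by split => //; apply: minq_ratio_ge0.
Qed.

Lemma algA_step_ge0 k :
  0 <= alpha -> 0 <= lambar -> 0 <= lam k.-1 -> 0 <= th k.-1 ->
  algA_step ip C F alpha lambar x y lam th k -> 0 <= lam k /\ 0 <= th k.
Proof.
move=> alpha_ge0 lambar_ge0 lam_ge0 th_ge0 [x0 [_ [_]]] /=.
have l0_ge0 := lam_fn_ge0 F alpha_ge0 lambar_ge0 (y k.-1) (2 *: x k - x k.-1)
  lam_ge0 th_ge0 ler01.
case=> [[_ [_ -> -> _]] | [_ [_ [/andP[le_lam _] _ _ -> _]]]
       | [_ [_ [/andP[th_gt0 _] [_ [/andP[le_lam _] _]]]]]].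
- by [].
- by split => //; apply: le_trans le_lam.
- split; last exact: ltW.
  by apply: le_trans le_lam; rewrite mulr_ge0 // ltW.
Qed.

Lemma algA_ge0 n :
  algA_init C F alpha lambar lam_m1 x y lam th ->
  (forall k, (1 <= k < n)%N -> algA_step ip C F alpha lambar x y lam th k) ->
  forall k, (k < n)%N -> 0 <= lam k /\ 0 <= th k.
Proof.
move=> init steps.
have [/andP[/ltW alpha_ge0 _] /ltW lambar_ge0] : 0 < alpha < Num.sqrt 2 - 1 /\ 0 < lambar.
  by case: init => _ [_ [? [? _]]].
elim=> [_|k IH lt_kn]; first exact: algA_init_ge0.
have [lam_ge0 th_ge0] := IH (ltnW lt_kn).
by apply: algA_step_ge0 => //; apply: steps; rewrite lt_kn.
Qed.

End Invariant.

Theorem lemma4p3 (R : realType) (H : completeNormedModType R)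
  (ip : H -> H -> R) (C : set H) (F : H -> H) (L alpha lambar lam_m1 : R)
  (x y : nat -> H) (lam th : nat -> R) (n : nat) (xn1 : H) :
  is_inner_product ip ->
  C !=set0 -> closed C -> convex_set C ->
  monotone_op ip F -> 0 < L -> lipschitz_op F L ->
  VI_solvable ip C F ->
  algA_init C F alpha lambar lam_m1 x y lam th ->
  (forall k, (1 <= k < n)%N -> algA_step ip C F alpha lambar x y lam th k) ->
  (1 <= n)%N ->
  (* iteration n: Step 2 *)
  let yn := 2 *: x n - x n.-1 in
  let ln := lam_fn F alpha lambar (y n.-1) (lam n.-1) (th n.-1) yn 1 in
  is_proj C (x n - ln *: F yn) xn1 ->
  (* Step 3: no stop, t_n > 0 ; Step 4(i): lambda_n >= lambda_{n-1} *)
  not_stopped (x n) yn xn1 ->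
  0 < t_val ip F alpha (x n) yn (y n.-1) ln xn1 ->
  lam n.-1 <= ln ->
  exists ln' : R, lam n.-1 <= ln' <= ln /\
    `|ln' *: F yn - lam n.-1 *: F (y n.-1)| <= alpha * `|yn - y n.-1|.
Proof.
move=> _ _ _ _ _ _ _ _ init steps n_ge1 yn ln _ _ _ le_lam.
have alpha_ge0 : 0 <= alpha.
  by case: init => _ [_ [/andP[/ltW ? _] _]].
have [lam_ge0 _] : 0 <= lam n.-1 /\ 0 <= th n.-1.
  by apply: (algA_ge0 init steps); rewrite prednK.
exists (lam n.-1); split; first by rewrite lexx le_lam.
exact: le_lam_fn_normBZ le_lam.
Qed.
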